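(* Let $w=w_1\cdots w_n$ be a word of length $n\ge 2$ using only two letters, such that $w_i\ne w_{n-i+1}$ for all $1\le i\le n$. Then $f(w)=2n$.
   Context: A word of length $n$ is a sequence $w=w_1w_2\cdots w_n$ of letters (symbols). Let $[n]=\{1,\dots,n\}$. An $n$-grid is a function $G:[n]^2\to\Sigma$, where $\Sigma$ is an arbitrary set of letters. The $i$th row of $G$ contains $w$ if $G(i,j)=w_j$ for all $1\le j\le n$, or $G(i,j)=w_{n-j+1}$ for all $1\le j\le n$. The $j$th column contains $w$ if $G(i,j)=w_i$ for all $i$, or $G(i,j)=w_{n-i+1}$ for all $i$. The main diagonal contains $w$ if $G(i,i)=w_i$ for all $i$ or $G(i,i)=w_{n-i+1}$ for all $i$; the anti-diagonal contains $w$ if $G(i,n-i+1)=w_i$ for all $i$ or $G(i,n-i+1)=w_{n-i+1}$ for all $i$. Let $f(w,G)$ be the number of the $2n+2$ lines ($n$ rows, $n$ columns, $2$ diagonals) of $G$ that contain $w$, and $f(w)=\max_G f(w,G)$ over all $n$-grids $G$. *)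

From mathcomp Require Import all_boot.
Set Implicit Arguments. Unset Strict Implicit. Unset Printing Implicit Defensive.

(* Indices are 0-based: position i : 'I_n corresponds to the paper's i+1,
   and the paper's n-i+1 corresponds to rev_ord i (value n-1-i). *)
Section Grid.
Variables (S : eqType) (n : nat).

Definition word := 'I_n -> S.
Definition grid := 'I_n -> 'I_n -> S.

Definition line_contains (w : word) (p : 'I_n -> S) : bool :=
  [forall j, p j == w j] || [forall j, p j == w (rev_ord j)].

Definition row_contains (w : word) (G : grid) (i : 'I_n) :=
  line_contains w (fun j => G i j).
Definition col_contains (w : word) (G : grid) (j : 'I_n) :=
  line_contains w (fun i => G i j).
Definition diag_contains (w : word) (G : grid) :=
  line_contains w (fun i => G i i).
Definition antidiag_contains (w : word) (G : grid) :=
  line_contains w (fun i => G i (rev_ord i)).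

Definition fwG (w : word) (G : grid) : nat :=
  #|[pred i | row_contains w G i]| + #|[pred j | col_contains w G j]|
  + diag_contains w G + antidiag_contains w G.

Definition f_is (w : word) (k : nat) : Prop :=
  (exists G : grid, fwG w G = k) /\ (forall G : grid, fwG w G <= k).

End Grid.

From mathcomp Require Import all_boot zify.
Set Implicit Arguments. Unset Strict Implicit. Unset Printing Implicit Defensive.

(* Upper bound: the first and last rows and columns and the two diagonals are
   the six lines joining two corners of the grid, i.e. the edges of K_4 on the
   corners.  Colour a letter by whether it equals w_1; since w_1 <> w_n, a line
   containing w joins corners of different colours, and a 2-colouring of K_4
   has at most 4 bichromatic edges.  Hence f(w,G) <= (n-2) + (n-2) + 4 = 2n.
   Lower bound: as w is two-letter and w_{n-i+1} is the other letter than w_i,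
   every row and column of the symmetric grid G(i,j) = [w_i = w_j ? a : b]
   reads w or its reversal. *)

Lemma rev_ord0 m : rev_ord (ord0 : 'I_m.+1) = ord_max.
Proof. by apply/val_inj; rewrite /= subn1. Qed.

Lemma rev_ord_max m : rev_ord (ord_max : 'I_m.+1) = ord0.
Proof. by apply/val_inj; rewrite /= subnn. Qed.

Lemma card_ord_le_ends m (P : pred 'I_m.+2) : #|P| <= P ord0 + P ord_max + m.
Proof.
have max_neq0 : (ord_max : 'I_m.+2) != ord0 by [].
have inner_card : #|[predD1 [predD1 'I_m.+2 & ord0] & ord_max]| = m.
  have := card_ord m.+2; rewrite (cardD1 ord0) (cardD1 ord_max) !inE max_neq0.
  by rewrite !add1n => -[].
rewrite (cardD1 ord0) (cardD1 ord_max) !inE max_neq0 /= -addnA !leq_add2l.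
rewrite -[X in _ <= X]inner_card; apply/subset_leq_card/subsetP => x.
by rewrite !inE => /andP[-> /andP[->]].
Qed.

Lemma bichromatic_K4_edges (c00 c01 c10 c11 : bool) :
  (c00 != c01) + (c10 != c11) + (c00 != c10) + (c01 != c11)
  + (c00 != c11) + (c01 != c10) <= 4.
Proof. by case: c00; case: c01; case: c10; case: c11. Qed.

Lemma eq_line_contains (S : eqType) n (w p q : 'I_n -> S) :
  p =1 q -> line_contains w p = line_contains w q.
Proof.
by move=> epq; rewrite /line_contains; congr (_ || _); apply: eq_forallb => j;
  rewrite epq.
Qed.

Section UpperBound.
Variables (S : eqType) (m : nat) (w : 'I_m.+2 -> S).
Hypothesis w_ends : w ord0 != w ord_max.

Lemma line_contains_ends p :
  line_contains w p -> (p ord0 == w ord0) != (p ord_max == w ord0).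
Proof.
have wN_neq0 : (w ord_max == w ord0) = false by rewrite eq_sym (negbTE w_ends).
case/orP=> /forallP p_w; rewrite (eqP (p_w ord0)) (eqP (p_w ord_max)).
  by rewrite eqxx wN_neq0.
by rewrite rev_ord0 rev_ord_max eqxx wN_neq0.
Qed.

Lemma fwG_le G : fwG w G <= 2 * m.+2.
Proof.
have lineP p : line_contains w p <= ((p ord0 == w ord0) != (p ord_max == w ord0)).
  by case: (boolP (line_contains _ _)) => // /line_contains_ends ->.
have r0 : row_contains w G ord0 <= _ := lineP _.
have r1 : row_contains w G ord_max <= _ := lineP _.
have k0 : col_contains w G ord0 <= _ := lineP _.
have k1 : col_contains w G ord_max <= _ := lineP _.
have d : diag_contains w G <= _ := lineP _.
have ad : antidiag_contains w G <= _ := lineP _.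
rewrite /= rev_ord0 rev_ord_max in ad.
pose c i j := G i j == w ord0.
have K4 := bichromatic_K4_edges (c ord0 ord0) (c ord0 ord_max)
  (c ord_max ord0) (c ord_max ord_max).
have corners : row_contains w G ord0 + row_contains w G ord_max
    + col_contains w G ord0 + col_contains w G ord_max
    + diag_contains w G + antidiag_contains w G <= 4.
  exact: leq_trans (leq_add (leq_add (leq_add (leq_add (leq_add r0 r1) k0) k1) d) ad) K4.
rewrite /fwG; set rows := #|_|; set cols := #|_|.
have rows_le : rows <= row_contains w G ord0 + row_contains w G ord_max + m.
  exact: card_ord_le_ends.
have cols_le : cols <= col_contains w G ord0 + col_contains w G ord_max + m.
  exact: card_ord_le_ends.
by clear -rows_le cols_le corners; lia.
Qed.

End UpperBound.

Section LowerBound.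
Variables (S : eqType) (n : nat) (w : 'I_n -> S) (a b : S).
Hypothesis w_ab : forall i, w i = a \/ w i = b.
Hypothesis w_antipal : forall i, w i != w (rev_ord i).

Definition agreement_grid : grid S n :=
  fun i j => if w i == w j then a else b.

Lemma agreement_grid_sym i j : agreement_grid i j = agreement_grid j i.
Proof. by rewrite /agreement_grid eq_sym. Qed.

Lemma agreement_grid_row i :
  agreement_grid i =1 w \/ agreement_grid i =1 (fun j => w (rev_ord j)).
Proof.
rewrite /agreement_grid; case: (w_ab i) => ->; [left | right] => j /=.
  by case: (w_ab j) => ->; rewrite ?eqxx //; case: eqP.
have := w_antipal j.
by case: (w_ab j) => ->; case: (w_ab (rev_ord j)) => ->;
  rewrite ?eqxx // eq_sym => /negbTE ->.
Qed.

Lemma row_contains_agreement_grid i : row_contains w agreement_grid i.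
Proof.
rewrite /row_contains.
by case: (agreement_grid_row i) => /(eq_line_contains w) ->;
  apply/orP; [left | right]; apply/forallP.
Qed.

Lemma col_contains_agreement_grid j : col_contains w agreement_grid j.
Proof.
rewrite /col_contains (@eq_line_contains _ _ _ _ (agreement_grid j)).
  exact: row_contains_agreement_grid.
by move=> i; rewrite agreement_grid_sym.
Qed.

Lemma fwG_agreement_grid : 2 * n <= fwG w agreement_grid.
Proof.
rewrite /fwG !eq_cardT ?size_enum_ord => [|j|i]; rewrite ?inE.
- by rewrite mul2n -addnn -addnA leq_addr.
- exact: col_contains_agreement_grid.
- exact: row_contains_agreement_grid.
Qed.

End LowerBound.

Theorem proposition3 (S : eqType) (n : nat) (w : 'I_n -> S) :
  2 <= n ->
  (exists a b : S, forall i : 'I_n, w i = a \/ w i = b) ->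
  (forall i : 'I_n, w i != w (rev_ord i)) ->
  f_is w (2 * n).
Proof.
case: n w => [|[|m]] w // _ [a [b w_ab]] w_antipal.
have w_ends : w ord0 != w ord_max by rewrite -rev_ord0.
split; last exact: fwG_le.
exists (agreement_grid w a b); apply/eqP.
by rewrite eqn_leq fwG_le // fwG_agreement_grid.
Qed.
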